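(* Let $\tilde C(q)=\sum_{g\ge3}\tilde c_gq^g$, where $\tilde c_g$ is the number of NSG-compositions $x_1+\cdots+x_{m-1}$ of genus $g$ with maximum $3$ and last part $x_{m-1}=3$. Then the generating series $\sum_g a_gq^g$, where $a_g$ is the number of NSG-compositions of genus $g$ with maximum exactly $3$, equals $\dfrac{\tilde C(q)}{1-q-q^2}$. Consequently the generating series of all NSG-compositions with maximum at most $3$ (including the empty one) is $\dfrac{1+\tilde C(q)}{1-q-q^2}$.
   Context: An NSG-composition is a composition $x_1+\cdots+x_{m-1}$ of positive integers ($m\ge1$, empty composition allowed) satisfying $x_{s+t}\le x_s+x_t$ and $x_{m-s-t}\le x_{m-s}+x_{m-t}+1$ for all $s,t\ge1$, $s+t<m$ (equivalently, the Kunz vector of a numerical semigroup of multiplicity $m$); its genus is $\sum x_j$ and its maximum is $\max_jx_j$. Equivalently, $\tilde c_g$ is the number of numerical semigroups of genus $g$ with Frobenius number $3m-1$, $m$ the multiplicity. *)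

From mathcomp Require Import all_boot all_order all_algebra.
Set Implicit Arguments. Unset Strict Implicit. Unset Printing Implicit Defensive.
Import GRing.Theory Num.Theory.

(* A composition x_1 + ... + x_{m-1} is represented by the sequence
   s = [:: x_1; ...; x_{m-1}], so m = size s + 1.  1-based access: *)
Definition xpart (s : seq nat) (j : nat) : nat := nth 0 s j.-1.

Definition is_NSG (s : seq nat) : bool :=
  let m := (size s).+1 in
  all (fun x => 0 < x) s &&
  all (fun a => all (fun b =>
        (a + b < m) ==>
        ((xpart s (a + b) <= xpart s a + xpart s b) &&
         (xpart s (m - a - b) <= xpart s (m - a) + xpart s (m - b) + 1)))
      (iota 1 m)) (iota 1 m).

Definition genus (s : seq nat) : nat := sumn s.
Definition maxpart (s : seq nat) : nat := foldr maxn 0 s.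

(* Number of NSG-compositions of genus g satisfying the extra property P.
   A composition of g with positive parts has at most g parts, each <= g,
   so we enumerate all k-tuples with entries in 'I_g.+1, k <= g. *)
Definition nsg_count (P : seq nat -> bool) (g : nat) : nat :=
  \sum_(k < g.+1)
    #|[pred t : k.-tuple 'I_g.+1 |
        let s := map val t in
        [&& genus s == g, is_NSG s & P s]]|.

Definition ctilde (g : nat) : nat :=
  if 3 <= g then nsg_count (fun s => (maxpart s == 3) && (last 0 s == 3)) g
  else 0.

Definition a_max3 (g : nat) : nat := nsg_count (fun s => maxpart s == 3) g.

Definition b_le3 (g : nat) : nat := nsg_count (fun s => maxpart s <= 3) g.

(* Formal power series over int, represented by coefficient functions;
   Cauchy product coefficient. *)
Definition ps_mul (f h : nat -> int) (n : nat) : int :=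
  (\sum_(i < n.+1) f i * h (n - i)%N)%R.

Definition one_m_q_m_q2 (n : nat) : int :=
  (if n == 0%N then 1 else if (n <= 2)%N then -1 else 0)%R.

From mathcomp Require Import all_boot all_order all_algebra zify ring.
Set Implicit Arguments. Unset Strict Implicit. Unset Printing Implicit Defensive.
Import GRing.Theory.

(* Classify a composition by its last part.  When all parts are at most
   3, the second ("dual") NSG inequality x_{m-s-t} <= x_{m-s} + x_{m-t} + 1
   holds automatically (the left side is <= 3, the right side >= 3), so being
   NSG reduces to positivity and subadditivity.  Appending a last part 1 or 2
   then preserves and reflects the NSG property, and does not change whether
   the maximum is 3 (or at most 3).  Hence, with a_g the count of genus g,
     a_g = [empty, g = 0] + #(last part 3) + a_{g-1} + a_{g-2},
   which is exactly the coefficientwise form of the claimed identities. *)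

(* [bounded_seqs n k]: the sequences of length at most k with entries < n,
   each listed exactly once; it replaces the sum over tuple lengths. *)
Fixpoint bounded_seqs (n k : nat) : seq (seq nat) :=
  if k is k'.+1 then [::] :: [seq x :: s | x <- iota 0 n, s <- bounded_seqs n k']
  else [:: [::]].

Lemma bounded_seqs_uniq n k : uniq (bounded_seqs n k).
Proof.
elim: k => [//|k IH] /=; apply/andP; split.
  by apply/negP => /allpairsP [[x s] [_ _]].
apply: allpairs_uniq => //; first exact: iota_uniq.
by move=> [x s] [y t] _ _ /= [-> ->].
Qed.

Lemma mem_bounded_seqs n k s :
  (s \in bounded_seqs n k) = (size s <= k) && all (fun x => x < n) s.
Proof.
elim: k s => [|k IH] [|x s] //=; rewrite in_cons /=.
apply/allpairsP/idP => [[[y t] [/= Hy Ht [-> ->]]] | /and3P [+ Hx Ha]].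
  by move: Hy Ht; rewrite mem_iota IH => /andP [_ ->].
rewrite ltnS => Hs; by exists (x, s); rewrite /= mem_iota IH Hx Ha Hs.
Qed.

Lemma card_tuple_nil n (Q : pred (seq nat)) :
  #|[pred t : 0.-tuple 'I_n | Q (map val t)]| = Q [::].
Proof.
rewrite -sum1_card big_mkcond /= (eq_bigr (fun _ => nat_of_bool (Q [::]))).
  by rewrite sum_nat_const card_tuple expn0 mul1n.
by move=> t _; rewrite tuple0.
Qed.

Lemma card_tuple_cons n j (Q : pred (seq nat)) :
  #|[pred t : j.+1.-tuple 'I_n | Q (map val t)]| =
  \sum_(x < n) #|[pred t : j.-tuple 'I_n | Q (val x :: map val t)]|.
Proof.
rewrite -sum1_card big_mkcond /=.
under [RHS]eq_bigr do rewrite -sum1_card big_mkcond /=.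
rewrite pair_big /= (reindex (fun p : 'I_n * j.-tuple 'I_n => [tuple of p.1 :: p.2])) //=.
exists (fun t => (thead t, [tuple of behead t])).
  by move=> [x t] _ /=; rewrite theadE; congr pair; apply: val_inj.
by move=> t _ /=; rewrite [in RHS](tuple_eta t).
Qed.

Lemma sum_card_tuples n k (Q : pred (seq nat)) :
  \sum_(j < k.+1) #|[pred t : j.-tuple 'I_n | Q (map val t)]|
  = count Q (bounded_seqs n k).
Proof.
elim: k Q => [|k IH] Q; first by rewrite big_ord1 card_tuple_nil /= addn0.
rewrite big_ord_recl card_tuple_nil /=; congr addn.
under eq_bigr do rewrite card_tuple_cons.
rewrite exchange_big /=.
under eq_bigr do rewrite (IH (fun s => Q (_ :: s))).
rewrite -(big_mkord xpredT (fun x => count (fun s => Q (x :: s)) _)) /index_iota subn0.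
elim: (iota 0 n) => [|x xs IHx]; first by rewrite big_nil.
by rewrite big_cons allpairs_cons count_cat count_map IHx.
Qed.

Lemma count_by_value (T : Type) (p : pred T) (f : T -> nat) n (l : seq T) :
  (forall x, p x -> f x < n) ->
  count p l = \sum_(c < n) count (fun x => p x && (f x == c)) l.
Proof.
move=> Hf; elim: l => [|x l IH] /=; first by rewrite big1.
rewrite big_split /= -IH; congr addn.
case px: (p x) => /=; last by rewrite big1.
rewrite (bigD1 (Ordinal (Hf x px))) //= eqxx big1 // => c.
by rewrite -val_eqE /= eq_sym => /negbTE ->.
Qed.

Lemma in_maxpart x s : x \in s -> x <= maxpart s.
Proof. by elim: s => [//|y s IH]; rewrite in_cons /= => /orP [/eqP ->|/IH]; lia. Qed.

Lemma maxpart_rcons s c : maxpart (rcons s c) = maxn (maxpart s) c.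
Proof. by elim: s => [|y s IH] /=; [lia | rewrite IH; lia]. Qed.

Lemma size_le_sumn s : all (fun x => 0 < x) s -> size s <= sumn s.
Proof. by elim: s => [//|x s IH] /= /andP [Hx /IH]; lia. Qed.

Lemma part_le_sumn x s : x \in s -> x <= sumn s.
Proof. by elim: s => [//|y s IH]; rewrite in_cons /= => /orP [/eqP ->|/IH]; lia. Qed.

Lemma last_le_sumn s : last 0 s <= sumn s.
Proof. by case: s => [//|x s]; apply/part_le_sumn/mem_last. Qed.

Lemma xpart_le_maxpart s j : xpart s j <= maxpart s.
Proof.
rewrite /xpart; case: (ltnP j.-1 (size s)) => Hj.
  exact/in_maxpart/mem_nth.
by rewrite nth_default.
Qed.

Lemma xpart_pos s j :
  all (fun x => 0 < x) s -> 0 < j <= size s -> 0 < xpart s j.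
Proof. by move=> /allP Hp Hj; apply/Hp/mem_nth; case: j Hj => //= j; lia. Qed.

Lemma xpart_rcons s c j : 0 < j <= size s -> xpart (rcons s c) j = xpart s j.
Proof. by move=> Hj; rewrite /xpart nth_rcons ifT //; case: j Hj => //= j; lia. Qed.

Lemma xpart_rcons_last s c : xpart (rcons s c) (size s).+1 = c.
Proof. by rewrite /xpart nth_rcons /= ltnn eqxx. Qed.

Definition subadditive (s : seq nat) : Prop :=
  forall a b, 0 < a -> 0 < b -> a + b <= size s ->
  xpart s (a + b) <= xpart s a + xpart s b.

Lemma is_NSG_pos s : is_NSG s -> all (fun x => 0 < x) s.
Proof. by case/andP. Qed.

Lemma is_NSG_small s : maxpart s <= 3 ->
  is_NSG s <-> all (fun x => 0 < x) s /\ subadditive s.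
Proof.
move=> Hm; rewrite /is_NSG; cbv zeta; split.
  case/andP => Hp /allP H; split => // a b a0 b0 ab.
  have /H /allP /(_ b) : a \in iota 1 (size s).+1 by rewrite mem_iota; lia.
  by rewrite mem_iota => /(_ ltac:(lia)) /implyP /(_ ltac:(lia)) /andP [].
move=> [Hp H]; rewrite Hp; apply/allP => a; rewrite mem_iota => /andP [a1 _].
apply/allP => b; rewrite mem_iota => /andP [b1 _]; apply/implyP => ab.
rewrite H /=; [|lia..].
have := xpart_le_maxpart s ((size s).+1 - a - b).
have := xpart_pos (j := (size s).+1 - a) Hp; have := xpart_pos (j := (size s).+1 - b) Hp.
lia.
Qed.

(* Appending a last part 1 or 2 to a composition with parts <= 3 preserves
   and reflects the NSG property: the only new inequality, for a + b = m - 1,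
   has a new left side c <= 2 <= x_a + x_b. *)
Lemma is_NSG_rcons_small s c : maxpart s <= 3 -> 0 < c <= 2 ->
  is_NSG (rcons s c) = is_NSG s.
Proof.
move=> Hm Hc; have Hm' : maxpart (rcons s c) <= 3 by rewrite maxpart_rcons; lia.
apply/idP/idP => [/(is_NSG_small Hm') [] | /(is_NSG_small Hm) [Hp H]].
  rewrite all_rcons => /andP [_ Hp] H; apply/(is_NSG_small Hm); split => // a b a0 b0 ab.
  by have := H a b a0 b0; rewrite size_rcons !xpart_rcons; [apply; lia | lia..].
apply/(is_NSG_small Hm'); rewrite all_rcons Hp andbT; split; first lia.
move=> a b a0 b0; rewrite size_rcons => ab.
rewrite (xpart_rcons _ _ (j := a)) ?(xpart_rcons _ _ (j := b)); [|lia..].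
case: (ltnP (a + b) (size s).+1) => ab'.
  by rewrite xpart_rcons; [apply: H|]; lia.
have -> : a + b = (size s).+1 by lia.
rewrite xpart_rcons_last.
by have := xpart_pos (j := a) Hp; have := xpart_pos (j := b) Hp; lia.
Qed.

Definition candidates (g : nat) : seq (seq nat) := bounded_seqs g.+1 g.

Definition nsg_of_genus (P : pred (seq nat)) (g : nat) (s : seq nat) : bool :=
  [&& genus s == g, is_NSG s & P s].

Lemma nsg_countE (P : pred (seq nat)) g :
  nsg_count P g = count (nsg_of_genus P g) (candidates g).
Proof. exact: sum_card_tuples. Qed.

Lemma composition_in_candidates s :
  all (fun x => 0 < x) s -> s \in candidates (sumn s).
Proof.
move=> Hp; rewrite mem_bounded_seqs size_le_sumn //=.
by apply/allP => x /part_le_sumn; rewrite ltnS.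
Qed.

Lemma nsg_count_eq_list (P : pred (seq nat)) g l : uniq l ->
  (forall s, nsg_of_genus P g s -> s \in l) ->
  nsg_count P g = count (nsg_of_genus P g) l.
Proof.
move=> Ul Hl; rewrite nsg_countE -!size_filter; apply/perm_size/uniq_perm.
- by rewrite filter_uniq ?bounded_seqs_uniq.
- by rewrite filter_uniq.
move=> s; rewrite !mem_filter; case Fs: (nsg_of_genus P g s) => //=.
rewrite Hl //; case/and3P: Fs => /eqP <- /is_NSG_pos + _.
exact: composition_in_candidates.
Qed.

Lemma eq_nsg_count (P Q : pred (seq nat)) : P =1 Q -> nsg_count P =1 nsg_count Q.
Proof.
by move=> PQ g; rewrite !nsg_countE; apply: eq_count => s; rewrite /nsg_of_genus PQ.
Qed.

Lemma nsg_count_by_value (P : pred (seq nat)) (f : seq nat -> nat) n g :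
  (forall s, is_NSG s -> P s -> f s < n) ->
  nsg_count P g = \sum_(c < n) nsg_count (fun s => P s && (f s == c)) g.
Proof.
move=> Hf; rewrite nsg_countE (count_by_value (f := f) (n := n)).
  by apply: eq_bigr => c _; rewrite nsg_countE; apply: eq_count => s; rewrite /nsg_of_genus !andbA.
by move=> s /and3P [_]; apply: Hf.
Qed.

(* No composition of genus g has a last part exceeding g. *)
Lemma nsg_count_vanish (P : pred (seq nat)) g :
  (forall s, P s -> g < last 0 s) -> nsg_count P g = 0.
Proof.
move=> HP; rewrite (nsg_count_eq_list (l := [::])) // => s /and3P [/eqP Hg _ /HP].
by have := last_le_sumn s; rewrite /genus in Hg; lia.
Qed.

(* Parts are positive, so "last part 0" means the empty composition. *)
Lemma nsg_count_empty (P : pred (seq nat)) g :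
  nsg_count (fun s => P s && (last 0 s == 0)) g = P [::] && (g == 0).
Proof.
rewrite (nsg_count_eq_list (l := [:: [::]])) //=.
  by rewrite /nsg_of_genus /= andbT addn0 eq_sym andbC.
move=> [//|x s] /and3P [_ /is_NSG_pos /allP Hp /andP [_ /eqP Hl]].
by have := Hp _ (mem_last x s); rewrite -[last x s]/(last 0 (x :: s)) Hl.
Qed.

(* The coefficient of q^(g-k) in a series with coefficients f (0 if g < k). *)
Definition shifted (f : nat -> nat) (k g : nat) : nat :=
  if k <= g then f (g - k) else 0.

Section AppendSmallPart.
Variable P : pred (seq nat).
Hypothesis P_rcons : forall s d, 0 < d <= 2 -> P (rcons s d) = P s.
Hypothesis P_small : forall s, P s -> maxpart s <= 3.

(* Removing a last part c in {1, 2} is a bijection onto the compositions of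
   genus g - c satisfying P. *)
Lemma nsg_count_last_small c g : 0 < c <= 2 ->
  nsg_count (fun s => P s && (last 0 s == c)) g = shifted (nsg_count P) c g.
Proof.
move=> Hc; rewrite /shifted; case: leqP => Hcg; last first.
  by apply: nsg_count_vanish => s /andP [_ /eqP ->].
rewrite (nsg_count_eq_list (l := map (rcons^~ c) (candidates (g - c)))).
- rewrite count_map nsg_countE; apply: eq_count => s /=.
  rewrite /nsg_of_genus /genus sumn_rcons last_rcons eqxx andbT P_rcons //.
  case Ps: (P s); last by rewrite !andbF.
  rewrite is_NSG_rcons_small ?P_small //; congr andb; apply/eqP/eqP; lia.
- by rewrite map_inj_uniq ?bounded_seqs_uniq //; apply: rcons_injl.
case/lastP => [|s d]; first by case/and3P => _ _ /andP [_ /eqP /= H0]; lia.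
rewrite /nsg_of_genus /genus sumn_rcons last_rcons.
case/and3P => /eqP Hg /is_NSG_pos; rewrite all_rcons => /andP [_ Hp] /andP [_ /eqP Hd].
subst d; apply: map_f; have -> : g - c = sumn s by lia.
exact: composition_in_candidates.
Qed.

Lemma nsg_count_by_last g :
  nsg_count P g = (P [::] && (g == 0)) + nsg_count (fun s => P s && (last 0 s == 3)) g
                  + shifted (nsg_count P) 1 g + shifted (nsg_count P) 2 g.
Proof.
have last_lt4 s : is_NSG s -> P s -> last 0 s < 4.
  move=> _ /P_small; case: s => [//|x s] Hs.
  exact: leq_trans (in_maxpart (mem_last x s)) Hs.
rewrite (nsg_count_by_value g last_lt4) !big_ord_recl big_ord0 /=.
rewrite nsg_count_empty (nsg_count_last_small (c := 1)) ?(nsg_count_last_small (c := 2)) //.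
by change (bump 0 (bump 0 (bump 0 0))) with 3; lia.
Qed.

End AppendSmallPart.

Lemma max3_rcons s d : 0 < d <= 2 -> (maxpart (rcons s d) == 3) = (maxpart s == 3).
Proof. by move=> Hd; rewrite maxpart_rcons; apply/eqP/eqP; lia. Qed.

Lemma max_le3_rcons s d : 0 < d <= 2 -> (maxpart (rcons s d) <= 3) = (maxpart s <= 3).
Proof. by move=> Hd; rewrite maxpart_rcons; apply/idP/idP; lia. Qed.

Lemma max_le3_last3 s :
  (maxpart s <= 3) && (last 0 s == 3) = (maxpart s == 3) && (last 0 s == 3).
Proof.
case: s => [//|x s]; case: eqP => [Hl|]; rewrite ?andbF // !andbT.
have := in_maxpart (mem_last x s); rewrite -[last x s]/(last 0 (x :: s)) Hl.
by move=> H3; apply/idP/eqP => [Hle | ->]; first apply/eqP; rewrite ?eqn_leq ?Hle ?H3.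
Qed.

Lemma ctilde_nsg_count g :
  ctilde g = nsg_count (fun s => (maxpart s == 3) && (last 0 s == 3)) g.
Proof.
rewrite /ctilde; case: leqP => // Hg.
by symmetry; apply: nsg_count_vanish => s /andP [_ /eqP ->].
Qed.

Lemma mul_one_m_q_m_q2 (f : nat -> nat) g : (
  ps_mul (fun n => (f n)%:Z) one_m_q_m_q2 g
  = (f g)%:Z - (shifted f 1 g)%:Z - (shifted f 2 g)%:Z)%R.
Proof.
rewrite /ps_mul /one_m_q_m_q2 /shifted.
case: g => [|[|k]].
- by rewrite big_ord1 /= mulr1 !subr0.
- by rewrite big_ord_recr big_ord1 /= mulr1 mulrN1 subr0 subnn addrC.
- rewrite !big_ord_recr /= big1; last first.
    move=> i _; have Hi := ltn_ord i.
    have -> : (k.+2 - i == 0) = false by lia.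
    have -> : (k.+2 - i <= 2) = false by lia.
    by rewrite mulr0.
  rewrite subnn !subSS !subn0 (subSn (leqnSn k)) subSnn /= mulr1 !mulrN1.
  by rewrite add0r; ring.
Qed.

Local Open Scope ring_scope.

Theorem proposition13p1 :
  (forall g : nat,
     ps_mul (fun n => (a_max3 n)%:Z) one_m_q_m_q2 g = (ctilde g)%:Z) /\
  (forall g : nat,
     ps_mul (fun n => (b_le3 n)%:Z) one_m_q_m_q2 g
       = (g == 0%N)%:Z + (ctilde g)%:Z).
Proof.
split => g; rewrite mul_one_m_q_m_q2 ctilde_nsg_count.
- change a_max3 with (nsg_count (fun s => maxpart s == 3)%N).
  by rewrite (nsg_count_by_last max3_rcons) /= => [|s /eqP -> //]; lia.
- change b_le3 with (nsg_count (fun s => maxpart s <= 3)%N).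
  rewrite (nsg_count_by_last max_le3_rcons) // (eq_nsg_count max_le3_last3) /=.
  by case: (g == 0%N); lia.
Qed.
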